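(* Let $X$ be a Banach space over $\mathbb{K}$. If there exists a Banach space $Y\neq\{0\}$ over $\mathbb{K}$ such that the pair $(X,Y)$ has the uniform sBPBp, then the pair $(X,\mathbb{K})$ has the uniform sBPBp (with the same function $\eta(\varepsilon)$).
   Context: $\mathbb{K}=\mathbb{R}$ or $\mathbb{C}$. $S_X$ denotes the unit sphere of $X$ and $\mathcal{L}(X,Y)$ the space of bounded linear operators from $X$ to $Y$ with the operator norm; $\mathcal{L}(X,\mathbb{K})=X^*$. A pair of Banach spaces $(X,Y)$ has the uniform strong Bishop–Phelps–Bollobás property (uniform sBPBp) if for every $\varepsilon>0$ there exists $\eta(\varepsilon)>0$ such that whenever $T\in\mathcal{L}(X,Y)$ with $\|T\|=1$ and $x_0\in S_X$ satisfy $\|T(x_0)\|>1-\eta(\varepsilon)$, there exists $x_1\in S_X$ with $\|T(x_1)\|=1$ and $\|x_1-x_0\|<\varepsilon$. *)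

From Stdlib Require Import Reals.
Open Scope R_scope.

(** Scalar field K = R or C.  C is modelled as R * R. *)
Inductive Kind : Type := KR | KC.

Definition Kt (k : Kind) : Type :=
  match k with KR => R | KC => (R * R)%type end.

Definition K0 (k : Kind) : Kt k :=
  match k return Kt k with KR => 0 | KC => (0, 0) end.
Definition K1 (k : Kind) : Kt k :=
  match k return Kt k with KR => 1 | KC => (1, 0) end.
Definition Kadd (k : Kind) : Kt k -> Kt k -> Kt k :=
  match k return Kt k -> Kt k -> Kt k with
  | KR => Rplus
  | KC => fun a b => (fst a + fst b, snd a + snd b)
  end.
Definition Kopp (k : Kind) : Kt k -> Kt k :=
  match k return Kt k -> Kt k with
  | KR => Ropp
  | KC => fun a => (- fst a, - snd a)
  end.
Definition Kmul (k : Kind) : Kt k -> Kt k -> Kt k :=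
  match k return Kt k -> Kt k -> Kt k with
  | KR => Rmult
  | KC => fun a b => (fst a * fst b - snd a * snd b, fst a * snd b + snd a * fst b)
  end.
Definition Kabs (k : Kind) : Kt k -> R :=
  match k return Kt k -> R with
  | KR => Rabs
  | KC => fun a => sqrt (fst a * fst a + snd a * snd a)
  end.

(** Data of a normed space over K (axioms are in [is_banach]). *)
Record NormedSpace (k : Kind) : Type := {
  carrier :> Type;
  vzero : carrier;
  vadd : carrier -> carrier -> carrier;
  vopp : carrier -> carrier;
  vscal : Kt k -> carrier -> carrier;
  vnorm : carrier -> R
}.
Arguments vzero {k} _.
Arguments vadd {k} {_} _ _.
Arguments vopp {k} {_} _.
Arguments vscal {k} {_} _ _.
Arguments vnorm {k} {_} _.

Definition vsub {k} {V : NormedSpace k} (x y : V) : V := vadd x (vopp y).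

Definition is_banach {k : Kind} (V : NormedSpace k) : Prop :=
  (forall x y z : V, vadd x (vadd y z) = vadd (vadd x y) z) /\
  (forall x y : V, vadd x y = vadd y x) /\
  (forall x : V, vadd x (vzero V) = x) /\
  (forall x : V, vadd x (vopp x) = vzero V) /\
  (forall (a : Kt k) (x y : V), vscal a (vadd x y) = vadd (vscal a x) (vscal a y)) /\
  (forall (a b : Kt k) (x : V), vscal (Kadd k a b) x = vadd (vscal a x) (vscal b x)) /\
  (forall (a b : Kt k) (x : V), vscal (Kmul k a b) x = vscal a (vscal b x)) /\
  (forall x : V, vscal (K1 k) x = x) /\
  (forall x : V, vnorm x = 0 <-> x = vzero V) /\
  (forall (a : Kt k) (x : V), vnorm (vscal a x) = Kabs k a * vnorm x) /\
  (forall x y : V, vnorm (vadd x y) <= vnorm x + vnorm y) /\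
  (forall u : nat -> V,
     (forall eps, eps > 0 -> exists N, forall m n, (N <= m)%nat -> (N <= n)%nat ->
        vnorm (vsub (u m) (u n)) < eps) ->
     exists l : V, forall eps, eps > 0 -> exists N, forall n, (N <= n)%nat ->
        vnorm (vsub (u n) l) < eps).

Definition Kspace (k : Kind) : NormedSpace k :=
  {| carrier := Kt k; vzero := K0 k; vadd := Kadd k; vopp := Kopp k;
     vscal := Kmul k; vnorm := Kabs k |}.

Definition bounded_linear {k} {X Y : NormedSpace k} (T : X -> Y) : Prop :=
  (forall x y : X, T (vadd x y) = vadd (T x) (T y)) /\
  (forall (a : Kt k) (x : X), T (vscal a x) = vscal a (T x)) /\
  (exists M : R, forall x : X, vnorm (T x) <= M * vnorm x).

Definition opnorm_is {k} {X Y : NormedSpace k} (T : X -> Y) (r : R) : Prop :=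
  is_lub (fun s => exists x : X, vnorm x <= 1 /\ s = vnorm (T x)) r.

Definition uniform_sBPBp_with {k} (X Y : NormedSpace k) (eta : R -> R) : Prop :=
  forall eps, eps > 0 ->
    eta eps > 0 /\
    forall (T : X -> Y) (x0 : X),
      bounded_linear T -> opnorm_is T 1 ->
      vnorm x0 = 1 -> vnorm (T x0) > 1 - eta eps ->
      exists x1 : X, vnorm x1 = 1 /\ vnorm (T x1) = 1 /\ vnorm (vsub x1 x0) < eps.

(* A norm-one functional f : X -> K becomes a norm-one operator x |-> f(x) u into Y once
   u is a unit vector of Y, and ||f(x) u|| = |f(x)|.  Applying the sBPBp of (X,Y) to this
   rank-one operator yields a point x1 where it, hence f, attains its norm. *)

From Stdlib Require Import Reals Lra.
Open Scope R_scope.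

Definition Kreal (k : Kind) (c : R) : Kt k :=
  match k return Kt k with KR => c | KC => (c, 0) end.

Lemma Kabs_real (k : Kind) (c : R) : 0 <= c -> Kabs k (Kreal k c) = c.
Proof.
  intros Hc; destruct k; simpl.
  - apply Rabs_pos_eq; exact Hc.
  - replace (c * c + 0 * 0) with (Rsqr c) by (unfold Rsqr; ring).
    apply sqrt_Rsqr; exact Hc.
Qed.

Lemma Kabs_opp_one (k : Kind) : Kabs k (Kopp k (K1 k)) = 1.
Proof.
  destruct k; simpl.
  - rewrite Rabs_Ropp; apply Rabs_R1.
  - transitivity (sqrt 1); [f_equal; ring | apply sqrt_1].
Qed.

Lemma Kabs_add_opp_one (k : Kind) : Kabs k (Kadd k (K1 k) (Kopp k (K1 k))) = 0.
Proof.
  destruct k; simpl.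
  - rewrite Rplus_opp_r; apply Rabs_R0.
  - rewrite <- sqrt_0; f_equal; ring.
Qed.

Section NormedSpaceFacts.

Context {k : Kind} {V : NormedSpace k}.
Hypothesis HV : is_banach V.

Lemma vnorm_scal (a : Kt k) (x : V) : vnorm (vscal a x) = Kabs k a * vnorm x.
Proof. destruct HV as (_ & _ & _ & _ & _ & _ & _ & _ & _ & H & _); apply H. Qed.

Lemma vnorm_eq0 (x : V) : vnorm x = 0 <-> x = vzero V.
Proof. destruct HV as (_ & _ & _ & _ & _ & _ & _ & _ & H & _); apply H. Qed.

(* [x + (-1) x = 0] together with the triangle inequality gives [0 <= 2 ||x||]. *)
Lemma vnorm_ge0 (x : V) : 0 <= vnorm x.
Proof.
  destruct HV as (_ & _ & _ & _ & _ & Hadd & _ & H1 & _ & _ & Htri & _).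
  assert (Hcancel : vadd x (vscal (Kopp k (K1 k)) x) = vzero V).
  { apply vnorm_eq0.
    rewrite <- (H1 x) at 1; rewrite <- Hadd, vnorm_scal, Kabs_add_opp_one; ring. }
  pose proof (Htri x (vscal (Kopp k (K1 k)) x)) as T.
  rewrite Hcancel, vnorm_scal, Kabs_opp_one, (proj2 (vnorm_eq0 _) eq_refl) in T.
  lra.
Qed.

Lemma exists_unit_vector (y : V) : y <> vzero V -> exists u : V, vnorm u = 1.
Proof.
  intros Hy.
  assert (Hpos : 0 < vnorm y).
  { destruct (vnorm_ge0 y) as [|Hz]; [assumption|].
    exfalso; apply Hy, vnorm_eq0; symmetry; exact Hz. }
  exists (vscal (Kreal k (/ vnorm y)) y).
  rewrite vnorm_scal, Kabs_real.
  - field; lra.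
  - left; apply Rinv_0_lt_compat; exact Hpos.
Qed.

End NormedSpaceFacts.

Lemma opnorm_is_ext {k : Kind} {X Y Z : NormedSpace k} (T : X -> Y) (S : X -> Z) (r : R) :
  (forall x, vnorm (T x) = vnorm (S x)) -> opnorm_is T r -> opnorm_is S r.
Proof.
  intros HTS [Hub Hleast]; split.
  - intros s [x [Hx ->]]; apply Hub; exists x; rewrite HTS; auto.
  - intros b Hb; apply Hleast; intros s [x [Hx ->]]; apply Hb; exists x; rewrite HTS; auto.
Qed.

Section RankOneOperator.

Context {k : Kind} {X Y : NormedSpace k}.
Hypothesis HY : is_banach Y.
Variables (f : X -> Kspace k) (u : Y).
Hypothesis Hu : vnorm u = 1.

Definition rank_one (x : X) : Y := vscal (f x) u.

Lemma vnorm_rank_one (x : X) : vnorm (rank_one x) = vnorm (f x).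
Proof. unfold rank_one; rewrite vnorm_scal, Hu by exact HY; simpl; ring. Qed.

Lemma bounded_linear_rank_one : bounded_linear f -> bounded_linear rank_one.
Proof.
  destruct HY as (_ & _ & _ & _ & _ & Hadd & Hmul & _).
  intros [Hfadd [Hfscal [M HM]]]; split; [|split].
  - intros x y; unfold rank_one; rewrite Hfadd; apply Hadd.
  - intros a x; unfold rank_one; rewrite Hfscal; apply Hmul.
  - exists M; intro x; rewrite vnorm_rank_one; apply HM.
Qed.

End RankOneOperator.

Theorem mainTheorem6 (k : Kind) (X : NormedSpace k) (eta : R -> R) :
  is_banach X ->
  (exists Y : NormedSpace k,
     is_banach Y /\ (exists y : Y, y <> vzero Y) /\ uniform_sBPBp_with X Y eta) ->
  uniform_sBPBp_with X (Kspace k) eta.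
Proof.
  intros _ [Y [HY [[y Hy] HXY]]].
  destruct (exists_unit_vector HY y Hy) as [u Hu].
  intros eps Heps; destruct (HXY eps Heps) as [Heta Hattain]; split; [exact Heta|].
  intros f x0 Hf Hfnorm Hx0 Hfx0.
  pose proof (vnorm_rank_one HY f u Hu) as Hnorm.
  destruct (Hattain (rank_one f u) x0) as [x1 [Hx1 [HTx1 Hclose]]].
  - exact (bounded_linear_rank_one HY f u Hu Hf).
  - apply (opnorm_is_ext f); [intro x; symmetry; apply Hnorm | exact Hfnorm].
  - exact Hx0.
  - rewrite Hnorm; exact Hfx0.
  - exists x1; rewrite <- Hnorm; auto.
Qed.
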